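(* Let $q$ be a prime power and $\mathcal{L}$ a non-empty set of lines of $\mathrm{PG}(n,q)$ satisfying (Pt), (Pl), (Sd) and (To) (see context). Let $M$ be a $4$-dimensional subspace of $\mathrm{PG}(n,q)$ and let $P$ be a $(q+1)$-$M$-point. Then the plane $\pi_P$ contains at most $q+2$ $(q+1)$-$M$-points.
   Context: (Pt): every point of $\mathrm{PG}(n,q)$ lies on $0$ or $q+1$ lines of $\mathcal{L}$. (Pl): every plane contains $0$, $1$ or $q+1$ lines of $\mathcal{L}$. (Sd): every solid ($3$-dimensional subspace) contains $0$, $1$, $q+1$ or $2q+1$ lines of $\mathcal{L}$. (To): $|\mathcal{L}|\le q^5+q^4+q^3+q^2+q+1$. A point $X$ is a $(q+1)$-$M$-point if exactly $q+1$ lines of $\mathcal{L}$ pass through $X$ and are contained in $M$. For a point $P$ lying on lines of $\mathcal{L}$, $\pi_P$ denotes the subspace spanned by the $q+1$ lines of $\mathcal{L}$ through $P$ (under these hypotheses this is a plane). *)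

(* PG(n,q) is modelled as the lattice of subspaces of the
   row space F^(n+1) over a finite field F with #|F| = q.  A projective
   subspace of (projective) dimension d is represented canonically by a square
   matrix X with <<X>>%MS = X and \rank X = d+1. *)
From HB Require Import structures.
From mathcomp Require Import all_boot all_order all_algebra all_field.
Set Implicit Arguments. Unset Strict Implicit. Unset Printing Implicit Defensive.
Import GRing.Theory.

Local Open Scope ring_scope.

Section PG.
Variables (F : finFieldType) (n : nat).

Definition psub (d : nat) (X : 'M[F]_n.+1) : bool :=
  (<<X>>%MS == X) && (\rank X == d.+1)%N.

Definition ppoint := psub 0.
Definition pline := psub 1.
Definition pplane := psub 2.
Definition psolid := psub 3.

Definition nlines_in (L : {set 'M[F]_n.+1}) (S : 'M[F]_n.+1) : nat :=
  #|[set l in L | (l <= S)%MS]|.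

Definition nlines_through (L : {set 'M[F]_n.+1}) (X : 'M[F]_n.+1) : nat :=
  #|[set l in L | (X <= l)%MS]|.

Definition qM_point (q : nat) (L : {set 'M[F]_n.+1}) (M X : 'M[F]_n.+1) : bool :=
  ppoint X && (#|[set l in L | (X <= l)%MS && (l <= M)%MS]| == q.+1)%N.

(* pi_P: the subspace spanned by the lines of L through P *)
Definition span_lines_through (L : {set 'M[F]_n.+1}) (P : 'M[F]_n.+1) : 'M[F]_n.+1 :=
  <<(\sum_(l in L | (P <= l)%MS) l)%MS>>%MS.

End PG.

(* Any three lines of L through a point are coplanar: otherwise they span a
   solid containing three planes with q+1 lines of L each, pairwise sharing at
   most one line, hence at least 3q > 2q+1 lines.  So pi_P is a plane whose lines
   of L are exactly the q+1 lines through P, all contained in M.  Let B be the set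
   of lines of L in M, not in pi_P, through some (q+1)-M-point X != P of pi_P.
   Each such X lies on at least q lines of B (only XP lies in pi_P), and each
   line of B carries only one such X.  Every line of B lies in one of the q+1
   solids of M through pi_P, and by (Sd) each of these solids contains at most
   2q+1 - (q+1) = q lines of B.  Hence q * #X <= #B <= q (q+1). *)

From mathcomp Require Import all_boot all_order all_algebra all_field.
From mathcomp Require Import zify.
Set Implicit Arguments. Unset Strict Implicit. Unset Printing Implicit Defensive.
Import GRing.Theory.

Local Open Scope ring_scope.

Lemma mxrank_cap_ltr (K : fieldType) m1 m2 m (A : 'M[K]_(m1, m)) (B : 'M[K]_(m2, m)) :
  ~~ (B <= A)%MS -> (\rank (A :&: B) < \rank B)%N.
Proof.
move=> nBA; rewrite (ltn_leqif (mxrank_leqif_sup (capmxSr A B))).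
by rewrite sub_capmx submx_refl andbT.
Qed.

Lemma mxrank_adds_step (K : fieldType) m1 m2 m d (A : 'M[K]_(m1, m)) (X : 'M[K]_(m2, m)) :
  \rank X = d.+1 -> ~~ (X <= A)%MS -> (d <= \rank (A :&: X))%N ->
  \rank (A + X)%MS = (\rank A).+1.
Proof.
move=> rX nXA capX; have := mxrank_sum_cap A X; have := mxrank_cap_ltr nXA.
by rewrite rX; lia.
Qed.

Lemma mxrank_geq_sub (K : fieldType) m1 m2 m (A : 'M[K]_(m1, m)) (B : 'M[K]_(m2, m)) :
  (A <= B)%MS -> (\rank B <= \rank A)%N -> (B <= A)%MS.
Proof.
by move=> sAB rBA; rewrite -(mxrank_leqif_sup sAB).2 eqn_leq rBA mxrankS.
Qed.

Lemma points_of_rank2 (K : fieldType) m (C : 'M[K]_m) : \rank C = 2%N ->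
  exists z : option K -> 'rV[K]_m,
    (forall t, z t != 0 /\ (z t <= C)%MS) /\
    (forall w : 'rV[K]_m, w != 0 -> (w <= C)%MS -> exists t, (z t <= w)%MS).
Proof.
move=> rC; set u := nz_row C; set v := nz_row (C :\: u)%MS.
have u0 : u != 0 by rewrite nz_row_eq0 -mxrank_eq0 rC.
have uC : (u <= C)%MS by apply: nz_row_sub.
have rCu : \rank (C :\: u)%MS = 1%N.
  by have := mxrank_cap_compl C u; rewrite (capmx_idPr uC) rank_rV u0 rC; lia.
have v0 : v != 0 by rewrite nz_row_eq0 -mxrank_eq0 rCu.
have vCu : (v <= C :\: u)%MS by apply: nz_row_sub.
have vC : (v <= C)%MS := submx_trans vCu (diffmxSl _ _).
have vu : ~~ (v <= u)%MS.
  apply: contra v0 => vu; rewrite -submx0 -(capmx_diff C u) sub_capmx vCu.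
  exact: vu.
have Cuv : (C <= u + v)%MS.
  apply: mxrank_geq_sub; first by rewrite addsmx_sub uC.
  by rewrite (mxrank_adds_step (d := 0)) ?rank_rV ?v0 ?u0 ?rC.
exists (fun t => if t is Some s then s *: u + v else u); split.
  case=> [s|] //; split; last by rewrite addmx_sub // scalemx_sub.
  apply: contra vu => /= suv0.
  by rewrite addrC addr_eq0 in suv0; rewrite (eqP suv0) -scaleNr scalemx_sub.
move=> w w0 wC; have /sub_addsmxP[[a b] /= wE] := submx_trans wC Cuv.
rewrite [a]mx11_scalar [b]mx11_scalar !mul_scalar_mx in wE; rewrite {}wE in w0 *.
have [b0|bn0] := eqVneq (b 0 0) 0.
  exists None; rewrite b0 scale0r addr0 in w0 *.
  have a0 : a 0 0 != 0 by apply: contra w0 => /eqP ->; rewrite scale0r.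
  by rewrite -{1}[u](scale1r) -(mulVf a0) -scalerA scalemx_sub.
exists (Some (a 0 0 / b 0 0)).
have -> : (a 0 0 / b 0 0) *: u + v = (b 0 0)^-1 *: (a 0 0 *: u + b 0 0 *: v).
  by rewrite scalerDr !scalerA mulVf // scale1r mulrC.
by rewrite scalemx_sub.
Qed.

Lemma double_count_leq (T1 T2 : finType) (A : {set T1}) (B : {set T2})
    (R : T1 -> T2 -> bool) (a b : nat) :
  (forall x, x \in A -> a <= #|[set y in B | R x y]|)%N ->
  (forall y, y \in B -> #|[set x in A | R x y]| <= b)%N ->
  (a * #|A| <= b * #|B|)%N.
Proof.
have card_sep T (D : {set T}) (p : pred T) : #|[set x in D | p x]| = (\sum_(x in D) p x)%N.
  by rewrite -sum1dep_card big_mkcondr; apply: eq_bigr => x _; case: (p x).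
move=> RA RB; rewrite mulnC -sum_nat_const mulnC -sum_nat_const.
apply: (@leq_trans (\sum_(x in A) #|[set y in B | R x y]|)); first exact: leq_sum.
under eq_bigr => x _ do rewrite card_sep.
rewrite exchange_big; apply: leq_sum => y yB; rewrite -card_sep; exact: RB.
Qed.

Lemma cardsU3_ge (T : finType) (A B C : {set T}) :
  (#|A| + #|B| + #|C| <= #|A :|: B :|: C| + #|A :&: B| + #|A :&: C| + #|B :&: C|)%N.
Proof.
have := cardsUI A B; have := cardsUI (A :|: B) C; rewrite setIUl.
by have := (leq_card_setU (A :&: C) (B :&: C)).1; lia.
Qed.

Section Subspaces.
Variables (F : finFieldType) (n : nat).
Implicit Types (X Y A : 'M[F]_n.+1).

Lemma psub_rank d X : psub d X -> \rank X = d.+1.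
Proof. by case/andP=> _ /eqP. Qed.

Lemma psub_gen d A : \rank A = d.+1 -> psub d <<A>>%MS.
Proof. by move=> rA; rewrite /psub genmx_id eqxx mxrank_gen rA eqxx. Qed.

Lemma psub_eq d X Y : psub d X -> psub d Y -> (X <= Y)%MS -> X = Y.
Proof.
case/andP=> /eqP gX /eqP rX /andP[/eqP gY /eqP rY] sXY.
by rewrite -gX -gY; apply/genmxP; rewrite sXY mxrank_geq_sub ?rX ?rY.
Qed.

Lemma psub_eq_in d X Y A : psub d X -> psub d Y ->
  (X <= A)%MS -> (Y <= A)%MS -> (\rank A <= d.+1)%N -> X = Y.
Proof.
move=> pX pY XA YA rA; apply/esym/(psub_eq pY pX).
by rewrite (submx_trans YA) // mxrank_geq_sub // (psub_rank pX).
Qed.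

Lemma psub_span d X A : psub d X -> (A <= X)%MS -> \rank A = d.+1 -> X = <<A>>%MS.
Proof. by move=> pX AX rA; apply/esym/(psub_eq (psub_gen rA) pX); rewrite genmxE. Qed.

Lemma psub_neq_nsub d X Y : psub d X -> psub d Y -> X != Y -> ~~ (Y <= X)%MS.
Proof. by move=> pX pY; apply: contra => YX; rewrite (psub_eq pY pX YX). Qed.

Lemma psub_neq_cap_rank d X Y : psub d X -> psub d Y -> X != Y ->
  (\rank (X :&: Y) <= d)%N.
Proof.
by move=> pX pY nXY; rewrite -ltnS -(psub_rank pY) mxrank_cap_ltr // (psub_neq_nsub pX pY nXY).
Qed.

Lemma psub_adds_rank d X Y : psub d X -> psub d Y -> X != Y ->
  (d <= \rank (X :&: Y))%N -> \rank (X + Y)%MS = d.+2.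
Proof.
move=> pX pY nXY capXY.
by rewrite (mxrank_adds_step (psub_rank pY)) ?(psub_rank pX) ?(psub_neq_nsub pX pY nXY).
Qed.

Lemma hyperplanes_through_cover (pi M : 'M[F]_n.+1) :
  (pi <= M)%MS -> \rank M = (\rank pi).+2 ->
  exists T : option F -> 'M[F]_n.+1,
    (forall t, psub (\rank pi) (T t) /\ (pi <= T t)%MS) /\
    (forall Y, (Y <= M)%MS -> \rank (pi + Y)%MS = (\rank pi).+1 ->
       exists t, (Y <= T t)%MS).
Proof.
move=> piM rM; set C := (M :\: pi)%MS.
have rC : \rank C = 2%N.
  by have := mxrank_cap_compl M pi; rewrite (capmx_idPr piM) rM -/C; lia.
have [z [zC zw]] := points_of_rank2 rC.
have z_pi t : ~~ (z t <= pi)%MS.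
  have [z0 ztC] := zC t; apply: contra z0 => zpi.
  by rewrite -submx0 -(capmx_diff M pi) sub_capmx ztC.
exists (fun t => <<(pi + z t)%MS>>%MS); split=> [t|Y YM rpiY].
  split; last by rewrite genmxE addsmxSl.
  by apply: psub_gen; rewrite (mxrank_adds_step (d := 0)) // rank_rV (zC t).1.
set W := ((pi + Y) :&: C)%MS.
have rW : (0 < \rank W)%N.
  have := mxrank_sum_cap (pi + Y)%MS C; rewrite rpiY rC.
  have : (\rank (pi + Y + C)%MS <= \rank M)%N.
    by rewrite mxrankS // !addsmx_sub piM YM diffmxSl.
  by rewrite rM -/W; lia.
have w0 : nz_row W != 0 by rewrite nz_row_eq0 -mxrank_eq0 -lt0n.
have wpiY : (nz_row W <= pi + Y)%MS := submx_trans (nz_row_sub W) (capmxSl _ _).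
have wC : (nz_row W <= C)%MS := submx_trans (nz_row_sub W) (capmxSr _ _).
have [t zt] := zw _ w0 wC; exists t.
have TpiY : (<<(pi + z t)%MS>> <= pi + Y)%MS.
  by rewrite genmxE addsmx_sub addsmxSl (submx_trans zt).
rewrite (submx_trans (addsmxSr pi Y)) // mxrank_geq_sub // mxrank_gen rpiY.
by rewrite (mxrank_adds_step (d := 0)) // rank_rV (zC t).1.
Qed.

End Subspaces.

Lemma pline_adds_rank (F : finFieldType) n (X l1 l2 : 'M[F]_n.+1) :
  ppoint X -> pline l1 -> pline l2 -> l1 != l2 -> (X <= l1)%MS -> (X <= l2)%MS ->
  \rank (l1 + l2)%MS = 3%N.
Proof.
move=> pX p1 p2 n12 X1 X2; apply: psub_adds_rank p1 p2 n12 _.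
by rewrite -(psub_rank pX) mxrankS // sub_capmx X1.
Qed.

Section LineSets.
Variables (F : finFieldType) (n q : nat) (L : {set 'M[F]_n.+1}).
Implicit Types (S E X l : 'M[F]_n.+1).

Definition lines_in S := [set l in L | (l <= S)%MS].
Definition lines_through X := [set l in L | (X <= l)%MS].

Hypothesis L_lines : forall l, l \in L -> pline l.

Lemma lines_inI S1 S2 : lines_in S1 :&: lines_in S2 = lines_in (S1 :&: S2)%MS.
Proof.
by apply/setP=> l; rewrite !inE sub_capmx; case: (l \in L).
Qed.

Lemma card_lines_in_rank_le2 S : (\rank S <= 2)%N -> (#|lines_in S| <= 1)%N.
Proof.
move=> rS; rewrite leqNgt; apply/negP=> /card_gt1P[l [m [+ + nlm]]].
rewrite !inE => /andP[lL lS] /andP[mL mS].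
by rewrite (psub_eq_in (L_lines lL) (L_lines mL) lS mS rS) eqxx in nlm.
Qed.

Lemma card_lines_in_planesI E1 E2 : pplane E1 -> pplane E2 -> E1 != E2 ->
  (#|lines_in E1 :&: lines_in E2| <= 1)%N.
Proof.
by move=> p1 p2 n12; rewrite lines_inI card_lines_in_rank_le2 ?(psub_neq_cap_rank p1).
Qed.

Hypothesis Pl : forall E, pplane E ->
  nlines_in L E = 0%N \/ nlines_in L E = 1%N \/ nlines_in L E = q.+1.
Hypothesis Sd : forall S, psolid S ->
  nlines_in L S = 0%N \/ nlines_in L S = 1%N \/ nlines_in L S = q.+1 \/
  nlines_in L S = (2 * q).+1.
Hypothesis q_gt1 : (1 < q)%N.

Lemma card_lines_in_plane E l1 l2 : pplane E ->
  l1 \in lines_in E -> l2 \in lines_in E -> l1 != l2 -> #|lines_in E| = q.+1.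
Proof.
move=> pE l1E l2E n12; have : (1 < #|lines_in E|)%N by apply/card_gt1P; exists l1, l2.
by case: (Pl pE) => [|[|]]; rewrite /nlines_in -/(lines_in E) => ->.
Qed.

Lemma lines_through_coplanar X l1 l2 l3 : ppoint X ->
  l1 \in lines_through X -> l2 \in lines_through X -> l3 \in lines_through X ->
  l1 != l2 -> (l3 <= l1 + l2)%MS.
Proof.
move=> pX; rewrite !inE => /andP[L1 X1] /andP[L2 X2] /andP[L3 X3] n12.
apply: contraT => n3.
have n13 : l1 != l3 by apply: contra n3 => /eqP <-; rewrite addsmxSl.
have n23 : l2 != l3 by apply: contra n3 => /eqP <-; rewrite addsmxSr.
pose E (a b : 'M[F]_n.+1) := <<(a + b)%MS>>%MS.
have E_plane a b : a \in L -> b \in L -> (X <= a)%MS -> (X <= b)%MS -> a != b ->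
    pplane (E a b) /\ #|lines_in (E a b)| = q.+1.
  move=> aL bL Xa Xb nab; have pE : pplane (E a b).
    by apply: psub_gen; apply: pline_adds_rank pX (L_lines aL) (L_lines bL) nab Xa Xb.
  split=> //; apply: card_lines_in_plane pE _ _ nab.
    by rewrite inE aL genmxE addsmxSl.
  by rewrite inE bL genmxE addsmxSr.
have [p12 c12] := E_plane _ _ L1 L2 X1 X2 n12.
have [p13 c13] := E_plane _ _ L1 L3 X1 X3 n13.
have [p23 c23] := E_plane _ _ L2 L3 X2 X3 n23.
have d1213 : E l1 l2 != E l1 l3.
  apply: contra n3 => /eqP e; have : (l3 <= E l1 l3)%MS by rewrite genmxE addsmxSr.
  by rewrite -e genmxE.
have d1223 : E l1 l2 != E l2 l3.
  apply: contra n3 => /eqP e; have : (l3 <= E l2 l3)%MS by rewrite genmxE addsmxSr.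
  by rewrite -e genmxE.
have d1323 : E l1 l3 != E l2 l3.
  apply: contra d1213 => /eqP e; apply/eqP/(psub_eq p12 p13).
  have l2E : (l2 <= E l1 l3)%MS by rewrite e genmxE addsmxSl.
  by rewrite genmxE addsmx_sub l2E genmxE addsmxSl.
set S := <<(l1 + l2 + l3)%MS>>%MS.
have pS : psolid S.
  apply: psub_gen; rewrite (mxrank_adds_step (d := 1)) ?(psub_rank (L_lines L3)) //.
    by rewrite (pline_adds_rank pX (L_lines L1) (L_lines L2)).
  by rewrite -(psub_rank pX) mxrankS // sub_capmx X3 (submx_trans X1) ?addsmxSl.
have ES a b : (a <= l1 + l2 + l3)%MS -> (b <= l1 + l2 + l3)%MS ->
    lines_in (E a b) \subset lines_in S.
  move=> aS bS; apply/subsetP=> l; rewrite !inE genmxE => /andP[-> lE] /=.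
  by rewrite genmxE (submx_trans lE) // addsmx_sub aS.
have [l1S l2S l3S] : [/\ (l1 <= l1 + l2 + l3)%MS, (l2 <= l1 + l2 + l3)%MS
    & (l3 <= l1 + l2 + l3)%MS].
  by rewrite addsmxSr !(submx_trans _ (addsmxSl _ l3)) ?addsmxSl ?addsmxSr.
have sub : lines_in (E l1 l2) :|: lines_in (E l1 l3) :|: lines_in (E l2 l3)
    \subset lines_in S by rewrite !subUset (ES _ _ l1S l2S) (ES _ _ l1S l3S) (ES _ _ l2S l3S).
have lower : (3 * q <= #|lines_in S|)%N.
  apply: leq_trans (subset_leq_card sub).
  have := cardsU3_ge (lines_in (E l1 l2)) (lines_in (E l1 l3)) (lines_in (E l2 l3)).
  have := card_lines_in_planesI p12 p13 d1213.
  have := card_lines_in_planesI p12 p23 d1223.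
  have := card_lines_in_planesI p13 p23 d1323.
  rewrite c12 c13 c23 => i23 i13 i12 U3; clear -i23 i13 i12 U3; lia.
case: (Sd pS) => [|[|[|]]]; rewrite /nlines_in -/(lines_in S) => e; rewrite e in lower;
  by clear -lower q_gt1; lia.
Qed.

End LineSets.

Section QMPointsInPlane.
Variables (F : finFieldType) (n q : nat) (L : {set 'M[F]_n.+1}) (M P : 'M[F]_n.+1).
Hypothesis cardF : #|F| = q.
Hypothesis L_lines : forall l, l \in L -> pline l.
Hypothesis Pt : forall X, ppoint X ->
  nlines_through L X = 0%N \/ nlines_through L X = q.+1.
Hypothesis Pl : forall E, pplane E ->
  nlines_in L E = 0%N \/ nlines_in L E = 1%N \/ nlines_in L E = q.+1.
Hypothesis Sd : forall S, psolid S ->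
  nlines_in L S = 0%N \/ nlines_in L S = 1%N \/ nlines_in L S = q.+1 \/
  nlines_in L S = (2 * q).+1.
Hypothesis M_solid4 : psub 4 M.
Hypothesis P_qM : qM_point q L M P.

Local Notation pi := (span_lines_through L P).
Local Notation lines_in := (lines_in L).
Local Notation lines_through := (lines_through L).

Let q_gt1 : (1 < q)%N. Proof. by rewrite -cardF card_finNzRing_gt1. Qed.
Let P_point : ppoint P. Proof. by case/andP: P_qM. Qed.

Lemma card_lines_through_P : #|lines_through P| = q.+1.
Proof.
case/andP: P_qM => _ /eqP cPM.
have : (q.+1 <= #|lines_through P|)%N.
  rewrite -cPM subset_leq_card //; apply/subsetP=> l.
  by rewrite !inE => /andP[-> /andP[-> _]].
by case: (Pt P_point); rewrite /nlines_through -/(lines_through P) => ->.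
Qed.

Lemma lines_through_P_sub_M l : l \in lines_through P -> (l <= M)%MS.
Proof.
case/andP: P_qM => _ /eqP cPM.
have sub : [set l in L | (P <= l)%MS && (l <= M)%MS] \subset lines_through P.
  by apply/subsetP=> m; rewrite !inE => /andP[-> /andP[-> _]].
move/(subset_cardP (etrans cPM (esym card_lines_through_P))): sub => e.
by rewrite -e inE => /andP[_ /andP[_ ->]].
Qed.

Lemma lines_through_P_sub_pi l : l \in lines_through P -> (l <= pi)%MS.
Proof. by move=> lP; rewrite genmxE (sumsmx_sup l) //; rewrite inE in lP. Qed.

Lemma pi_sub_M : (pi <= M)%MS.
Proof.
by rewrite genmxE; apply/sumsmx_subP => l lP; rewrite lines_through_P_sub_M ?inE.
Qed.

Lemma pplane_pi : pplane pi.
Proof.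
have [l1 [l2 [l1P l2P n12]]] : exists l1 l2,
    [/\ l1 \in lines_through P, l2 \in lines_through P & l1 != l2].
  by apply/card_gt1P; rewrite card_lines_through_P ltnS ltnW.
have pi_l12 : (pi <= l1 + l2)%MS.
  rewrite genmxE; apply/sumsmx_subP => l lP.
  by apply: (lines_through_coplanar L_lines Pl Sd q_gt1 P_point l1P l2P _ n12); rewrite inE.
have l12_pi : (l1 + l2 <= pi)%MS by rewrite addsmx_sub !lines_through_P_sub_pi.
have := l1P; have := l2P; rewrite !inE => /andP[L2 P2] /andP[L1 P1].
have r12 := pline_adds_rank P_point (L_lines L1) (L_lines L2) n12 P1 P2.
apply: psub_gen; rewrite -mxrank_gen; apply/eqP.
by rewrite -r12 eqn_leq !mxrankS.
Qed.

Lemma lines_in_pi : lines_in pi = lines_through P.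
Proof.
have sub : lines_through P \subset lines_in pi.
  apply/subsetP=> l lP; rewrite inE lines_through_P_sub_pi // andbT.
  by move: lP; rewrite inE => /andP[].
apply/esym/setP/subset_cardP => //; have := subset_leq_card sub.
rewrite card_lines_through_P.
case: (Pl pplane_pi) => [|[|]]; rewrite /nlines_in -/(lines_in pi) => -> //.
by rewrite ltnS; case: q q_gt1 => [|[]].
Qed.

Local Notation qpts := [set X | qM_point q L M X && (X <= pi)%MS && (X != P)].
Local Notation outer :=
  [set l in L | (l <= M)%MS && ~~ (l <= pi)%MS && [exists X in qpts, (X <= l)%MS]].

Lemma card_outer_in_solid T : psolid T -> (pi <= T)%MS ->
  (#|[set l in outer | (l <= T)%MS]| <= q)%N.
Proof.
move=> pT piT; set Bt := [set l in outer | _].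
have sub : lines_through P :|: Bt \subset lines_in T.
  apply/subsetP=> l; rewrite !inE => /orP[/andP[lL Pl']|/andP[/andP[lL _] lT]].
    by rewrite lL (submx_trans _ piT) // lines_through_P_sub_pi // inE lL.
  by rewrite lL.
have dis : lines_through P :&: Bt = set0.
  apply/setP=> l; rewrite !inE; apply/negbTE/negP.
  move=> /andP[/andP[lL Pl'] /andP[/andP[_ /andP[/andP[_ npi] _]] _]].
  by rewrite lines_through_P_sub_pi ?inE ?lL in npi.
have := cardsUI (lines_through P) Bt; rewrite dis cards0 card_lines_through_P.
have := subset_leq_card sub.
case: (Sd pT) => [|[|[|]]]; rewrite /nlines_in -/(lines_in T) => -> h1 h2;
  by clear -h1 h2; lia.
Qed.

Lemma outer_span_rank l : l \in outer -> \rank (pi + l)%MS = (\rank pi).+1.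
Proof.
rewrite inE => /andP[lL /andP[/andP[_ npi] /existsP[X /andP[]]]].
rewrite inE => /andP[/andP[/andP[pX _] Xpi] _] Xl.
rewrite (mxrank_adds_step (d := 1)) ?(psub_rank (L_lines lL)) //.
by rewrite -(psub_rank pX) mxrankS // sub_capmx Xpi.
Qed.

Lemma card_outer : (#|outer| <= q * q.+1)%N.
Proof.
have rM : \rank M = (\rank pi).+2 by rewrite (psub_rank M_solid4) (psub_rank pplane_pi).
have [T [T_solid T_cover]] := hyperplanes_through_cover pi_sub_M rM.
have := @double_count_leq _ _ outer [set: option F] (fun l t => l <= T t)%MS 1 q.
rewrite mul1n cardsT card_option cardF; apply=> [l lB|t _].
  have := lB; rewrite inE => /andP[_ /andP[/andP[lM _] _]].
  have [t lt] := T_cover l lM (outer_span_rank lB).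
  by apply/card_gt0P; exists t; rewrite !inE.
have [pT piT] := T_solid t; rewrite (psub_rank pplane_pi) in pT.
exact: card_outer_in_solid.
Qed.

Lemma card_outer_through X : X \in qpts -> (q <= #|[set l in outer | (X <= l)%MS]|)%N.
Proof.
move=> Xq; have := Xq; rewrite inE => /andP[/andP[/andP[pX /eqP cX] Xpi] nXP].
set BX := [set l in outer | _].
have sub : [set l in L | (X <= l)%MS && (l <= M)%MS] \subset BX :|: [set <<(X + P)%MS>>%MS].
  apply/subsetP=> l; rewrite !inE => /andP[lL /andP[Xl lM]].
  have [lpi|npi] := boolP (l <= pi)%MS.
    have : l \in lines_in pi by rewrite inE lL.
    rewrite lines_in_pi inE => /andP[_ Pl']; apply/orP; right; apply/eqP.
    apply: psub_span (L_lines lL) _ _; first by rewrite addsmx_sub Xl.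
    by apply: psub_adds_rank pX P_point nXP _.
  apply/orP; left; rewrite lL lM Xl andbT /=.
  by apply/existsP; exists X; rewrite Xq.
have := subset_leq_card sub; rewrite cX.
by have := (leq_card_setU BX [set <<(X + P)%MS>>%MS]).1; rewrite cards1; lia.
Qed.

Lemma card_qpts_on_outer l : l \in outer -> (#|[set X in qpts | (X <= l)%MS]| <= 1)%N.
Proof.
rewrite inE => /andP[lL /andP[/andP[_ npi] _]].
rewrite leqNgt; apply/negP=> /card_gt1P[X [Y []]]; rewrite !inE.
move=> /andP[/andP[/andP[/andP[pX _] Xpi] _] Xl] /andP[/andP[/andP[/andP[pY _] Ypi] _] Yl] nXY.
have rXY : \rank (X + Y)%MS = 2%N by apply: psub_adds_rank pX pY nXY _.
have XYl : (X + Y <= l)%MS by rewrite addsmx_sub Xl Yl.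
move/negP: npi; apply.
by rewrite (psub_span (L_lines lL) XYl rXY) genmxE addsmx_sub Xpi Ypi.
Qed.

Lemma card_qpts : (#|qpts| <= q.+1)%N.
Proof.
have := @double_count_leq _ _ qpts outer (fun X l => X <= l)%MS q 1.
move=> /(_ card_outer_through card_qpts_on_outer); rewrite mul1n => le_qB.
by rewrite -(@leq_pmul2l q) ?(leq_trans le_qB card_outer) // ltnW.
Qed.

Lemma card_qM_points_in_pi :
  (#|[set X | qM_point q L M X && (X <= pi)%MS]| <= q + 2)%N.
Proof.
apply: leq_trans (_ : #|P |: qpts| <= _)%N.
  by apply/subset_leq_card/subsetP=> X; rewrite !inE => ->; rewrite orbN.
by rewrite cardsU1; have := card_qpts; have := leq_b1 (P \notin qpts); lia.
Qed.

End QMPointsInPlane.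

Unset Implicit Arguments.

Theorem lemma8 (F : finFieldType) (n q : nat) (L : {set 'M[F]_n.+1})
  (M P : 'M[F]_n.+1) :
  #|F| = q ->
  L != set0 ->
  (forall l, l \in L -> pline l) ->
  (forall X, ppoint X -> nlines_through L X = 0%N \/ nlines_through L X = q.+1) ->
  (forall E, pplane E ->
     nlines_in L E = 0%N \/ nlines_in L E = 1%N \/ nlines_in L E = q.+1) ->
  (forall S, psolid S ->
     nlines_in L S = 0%N \/ nlines_in L S = 1%N \/ nlines_in L S = q.+1 \/
     nlines_in L S = (2 * q).+1) ->
  (#|L| <= q ^ 5 + q ^ 4 + q ^ 3 + q ^ 2 + q + 1)%N ->
  psub 4 M ->
  qM_point q L M P ->
  (#|[set X | qM_point q L M X && (X <= span_lines_through L P)%MS]| <= q + 2)%N.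
Proof.
move=> cardF _ L_lines Pt Pl Sd _ M_solid4 P_qM.
exact: card_qM_points_in_pi cardF L_lines Pt Pl Sd M_solid4 P_qM.
Qed.
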